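(* Let $\mathbb C^2_*=\mathbb C^2\setminus\{0\}$, $\Delta$ the open unit disc, and $\phi(v)=\frac{v+1/2}{1+v/2}$. Let $\mathbb Z$ act on $\mathbb C^2_*\times\Delta$ by $n\cdot(z,v)=(2^nz,\phi^n(v))$ and let $\Omega=(\mathbb C^2_*\times\Delta)/\mathbb Z$ (a flat disc bundle over the Hopf surface). Let $A=\Delta/\{\phi^n:n\in\mathbb Z\}$. Then $\Omega$ is biholomorphic to the product $A\times\mathbb C^2_*$. *)

From mathcomp Require Import all_boot all_order all_algebra.
From mathcomp Require Import all_classical all_reals all_analysis.
From mathcomp Require Import complex.
Import numFieldNormedType.Exports.

Set Implicit Arguments.
Unset Strict Implicit.
Unset Printing Implicit Defensive.

Import GRing.Theory Num.Theory.
Local Open Scope ring_scope.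
Local Open Scope classical_set_scope.

(* The complex numbers, seen as a numFieldType so that it (and 'rV[C]_n)
   carries MathComp-Analysis normed-module structures over C itself;
   hence [differentiable] below is complex (C-linear) Frechet
   differentiability, i.e. holomorphy. *)
Definition C (R : realType) : numFieldType := R[i].

Definition co (R : realType) (p : 'rV[C R]_3) (k : nat) : C R := p ord0 (inord k).

Definition phi (R : realType) (v : C R) : C R := (v + 2^-1) / (1 + v / 2).
Definition phi_inv (R : realType) (v : C R) : C R := (v - 2^-1) / (1 - v / 2).

Definition phi_pow (R : realType) (n : int) : C R -> C R :=
  match n with
  | Posz k => iter k (@phi R)
  | Negz k => iter k.+1 (@phi_inv R)
  end.

(* C^2_* x Delta, embedded in C^3 as (z1, z2, v). *)
Definition Xdom (R : realType) : set 'rV[C R]_3 :=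
  [set p | (co p 0 != 0 \/ co p 1 != 0) /\ `|co p 2| < 1].

Definition Xrel (R : realType) (p p' : 'rV[C R]_3) : Prop :=
  exists n : int, [/\ co p' 0 = (2 : C R) ^ n * co p 0,
                      co p' 1 = (2 : C R) ^ n * co p 1 &
                      co p' 2 = phi_pow n (co p 2)].

(* Delta x C^2_*, embedded in C^3 as (v, z1, z2). *)
Definition Ydom (R : realType) : set 'rV[C R]_3 :=
  [set q | `|co q 0| < 1 /\ (co q 1 != 0 \/ co q 2 != 0)].

(* Orbit relation of Z acting by phi^n on the Delta factor only;
   the quotient is A x C^2_* with A = Delta / <phi>. *)
Definition Yrel (R : realType) (q q' : 'rV[C R]_3) : Prop :=
  exists n : int, [/\ co q' 0 = phi_pow n (co q 0),
                      co q' 1 = co q 1 &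
                      co q' 2 = co q 2].

(* A map of representatives f : V -> W induces a well-defined map of
   quotients X/~ -> Y/~ . *)
Definition qwell_defined (R : realType) (V W : normedModType (C R))
  (X : set V) (eX : V -> V -> Prop) (Y : set W) (eY : W -> W -> Prop)
  (f : V -> W) : Prop :=
  (forall x, X x -> Y (f x)) /\
  (forall x x', X x -> X x' -> eX x x' -> eY (f x) (f x')).

(* The induced map of quotients is holomorphic: in the charts given by the
   (local biholomorphic) projections X -> X/~ and Y -> Y/~, it is locally
   represented by holomorphic maps. *)
Definition qholomorphic (R : realType) (V W : normedModType (C R))
  (X : set V) (Y : set W) (eY : W -> W -> Prop) (f : V -> W) : Prop :=
  forall x, X x -> exists g : V -> W,
    \forall y \near x, differentiable g y /\
                       (X y -> Y (g y) /\ eY (g y) (f y)).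

Definition quot_biholomorphic (R : realType) (V W : normedModType (C R))
  (X : set V) (eX : V -> V -> Prop) (Y : set W) (eY : W -> W -> Prop) : Prop :=
  exists (f : V -> W) (g : W -> V),
    [/\ qwell_defined X eX Y eY f, qwell_defined Y eY X eX g,
        qholomorphic X Y eY f, qholomorphic Y X eX g &
        ((forall x, X x -> eX (g (f x)) x) /\
         (forall y, Y y -> eY (f (g y)) y))].

(* The multiplier lambda (v) := ((1 + v) / (1 - v)) ^ (ln 2 / ln 3) is
   holomorphic and nowhere zero on the unit disc, and satisfies
   lambda (phi v) = 2 lambda (v): the Cayley map conjugates phi to t |-> 3 t on
   the right half-plane, and 3 ^ (ln 2 / ln 3) = 2.  Hence
   (z, v) |-> (v, z / lambda (v)) is invariant under the Z-action
   (z, v) |-> (2 z, phi v) and descends to Omega -> A x C^2_*, with inverse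
   induced by (v, w) |-> (lambda (v) w, v). *)

From mathcomp Require Import all_boot all_order all_algebra.
From mathcomp Require Import all_classical all_reals all_analysis.
From mathcomp Require Import complex.
From mathcomp Require Import ring lra.
Import numFieldNormedType.Exports.
Import Order.TTheory GRing.Theory Num.Theory.
Import Normc.
Set Implicit Arguments.
Unset Strict Implicit.
Unset Printing Implicit Defensive.
Local Open Scope ring_scope.
Local Open Scope classical_set_scope.

Section DerivativeQuotient.
Context {K : numFieldType}.
Implicit Types (f g : K -> K) (x t d : K).

Lemma is_derive1P f x d :
  is_derive x 1 f d <-> h^-1 * (f (h + x) - f x) @[h --> 0^'] --> d.
Proof.
split => [[df <-]|dfd].
  apply: cvg_trans df; apply: near_eq_cvg; near=> h.
  by rewrite /= [h%:A]mulr1.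
have df : derivable f x 1.
  apply/cvg_ex; exists d; apply: cvg_trans dfd; apply: near_eq_cvg; near=> h.
  by rewrite /= [h%:A]mulr1.
split => //; apply: cvg_lim => //; apply: cvg_trans dfd.
apply: near_eq_cvg; near=> h.
by rewrite /= [h%:A]mulr1.
Unshelve. all: by end_near.
Qed.

Lemma is_derive_small_o f x d e : is_derive x 1 f d -> 0 < e ->
  \forall h \near 0, `|f (h + x) - f x - h * d| <= e * `|h|.
Proof.
move=> /is_derive1P /cvgrPdist_le /[apply]; rewrite near_withinE.
apply: filterS => h near_d; have [->|h0] := eqVneq h 0.
  by rewrite add0r subrr mul0r subr0 normr0 mulr0.
have -> : f (h + x) - f x - h * d = - ((d - h^-1 * (f (h + x) - f x)) * h).
  by field.
by rewrite normrN normrM ler_wpM2r ?near_d.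
Qed.

(* Along k h := g (h + t) - g t, which tends to 0 without vanishing, the
   difference quotient of g at t is the inverse of that of f at g t. *)
Lemma is_derive_inverse_near f g t d :
  {for t, continuous g} -> (\forall s \near t, f (g s) = s) ->
  is_derive (g t) 1 f d -> d != 0 -> is_derive t 1 g d^-1.
Proof.
move=> gC fgK /is_derive1P fD d0; apply/is_derive1P.
have fgt : f (g t) = t := nbhs_singleton fgK.
have gD : g (h + t) @[h --> 0^'] --> g t := (continuous_withinNshiftx g t).2 gC.
pose k h := g (h + t) - g t.
have k0 : k @ 0^' --> 0 by have := cvgB gD (cvg_cst (g t)); rewrite subrr; apply.
have fgK0 : \forall h \near 0^', f (g (h + t)) = h + t.
  near=> h; rewrite addrC; near: h; apply: cvg_within; exact: (nbhs0P _ t).1 fgK.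
have kN0 : \forall h \near 0^', k h != 0.
  near=> h; have h0 : h != 0 by near: h; exact: nbhs_dnbhs_neq.
  apply: contra_neq h0 => /subr0_eq gE; apply/(addIr t).
  by rewrite add0r -(near fgK0 h) // gE fgt.
have kD : k @ 0^' --> 0^'.
  move=> A /= A0; apply: filterS2 kN0 (k0 _ A0) => h kh0; exact.
apply: cvg_trans (cvgV d0 (cvg_comp _ _ kD fD)); apply: near_eq_cvg.
near=> h; rewrite /= /k subrK (near fgK0 h) // fgt addrK.
by rewrite invfM invrK mulrC.
Unshelve. all: by end_near.
Qed.

End DerivativeQuotient.

Lemma addr_neq0_norm_lt1 {K : numDomainType} (a v : K) :
  1 <= `|a| -> `|v| < 1 -> a + v != 0.
Proof.
move=> a1 v1; apply: contraTneq v1 => /addr0_eq <-.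
by rewrite normrN -real_leNgt ?num_real.
Qed.

Lemma near_norm_lt1 {K : numFieldType} {T : topologicalType} (u : T -> K) x :
  {for x, continuous u} -> `|u x| < 1 -> \forall y \near x, `|u y| < 1.
Proof.
move=> uC ux1; have : 0 < 1 - `|u x| by rewrite subr_gt0.
move=> /(cvgr_dist_lt _ _ uC); apply: filterS => y uxy.
have := ler_normD (u y - u x) (u x); rewrite subrK distrC => /le_lt_trans; apply.
by rewrite -ltrBrDr.
Qed.

Lemma powR_ln_div (R : realType) (a b : R) :
  1 < a -> 0 < b -> a `^ (ln b / ln a) = b.
Proof.
move=> a1 b0; have a0 : 0 < a by apply: lt_trans a1.
by rewrite /powR gt_eqF // divfK ?lnK ?gt_eqF ?ln_gt0.
Qed.

Section ComplexModulus.
Context {R : realType}.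
Implicit Types x y : C R.

Lemma normcE x : `|x| = (normc x)%:C%C.
Proof. by case: x. Qed.

Lemma normc_ge0 x : 0 <= normc x.
Proof. by case: x => a b; exact: sqrtr_ge0. Qed.

Lemma normc_gt0 x : x != 0 -> 0 < normc x.
Proof.
move=> x0; rewrite lt_neqAle normc_ge0 andbT eq_sym.
by apply: contra x0 => /eqP/eq0_normc ->.
Qed.

Lemma normcR (r : R) : normc r%:C%C = `|r|.
Proof. by rewrite /normc /= expr0n addr0 sqrtr_sqr. Qed.

Lemma normc_dist x y : `|normc x - normc y| <= normc (x - y).
Proof. exact: (@ler_dist_dist _ (Rcomplex R)). Qed.

Lemma normc_Re x : `|complex.Re x| <= normc x.
Proof.
case: x => a b; rewrite -sqrtr_sqr; apply: ler_wsqrtr.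
by rewrite lerDl sqr_ge0.
Qed.

Lemma normc_Im x : `|complex.Im x| <= normc x.
Proof.
case: x => a b; rewrite -sqrtr_sqr; apply: ler_wsqrtr.
by rewrite lerDr sqr_ge0.
Qed.

Lemma normc_le_ReIm x : normc x <= `|complex.Re x| + `|complex.Im x|.
Proof.
case: x => a b /=; rewrite -[X in _ <= X]ger0_norm ?addr_ge0 // -sqrtr_sqr.
apply: ler_wsqrtr; rewrite -[a ^+ 2]real_normK ?num_real //.
by rewrite -[b ^+ 2]real_normK ?num_real // sqrrD -addrAC lerDl mulrn_wge0.
Qed.

Lemma Re_gt0_neq0 x : 0 < complex.Re x -> x != 0.
Proof. by apply: contraTneq => ->; rewrite ltxx. Qed.

Lemma cvgC_normcP {T} {F : set_system T} {FF : Filter F} (f : T -> C R) l :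
  f @ F --> l <-> forall e, 0 < e -> \forall s \near F, normc (l - f s) < e.
Proof.
rewrite cvgrPdist_lt; split => [fl e e0|fl e].
  by apply: filterS (fl e%:C%C _) => [s|]; rewrite ?normcE ltcR.
case: e => a b; rewrite ltcE /= => /andP[/eqP-> a0].
by apply: filterS (fl a a0) => s; rewrite normcE ltcR.
Qed.

Lemma normc_lipschitz_continuous (u : C R -> R) :
  (forall x y, `|u x - u y| <= normc (x - y)) -> continuous u.
Proof.
move=> u_lip x; apply/(cvgrPdist_lt (FF := nbhs_filter x)) => e e0.
have /(cvgC_normcP (FF := nbhs_filter x))/(_ e e0) := @cvg_id _ (nbhs x).
by apply: filterS => y /(le_lt_trans (u_lip x y)).
Qed.

Lemma continuous_Re : continuous (fun x : C R => complex.Re x).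
Proof.
by apply: normc_lipschitz_continuous => x y; rewrite -raddfB; exact: normc_Re.
Qed.

Lemma continuous_Im : continuous (fun x : C R => complex.Im x).
Proof.
by apply: normc_lipschitz_continuous => x y; rewrite -raddfB; exact: normc_Im.
Qed.

Lemma continuous_normc : continuous (fun x : C R => normc x).
Proof. exact: normc_lipschitz_continuous normc_dist. Qed.

Lemma near0_ReIm (P : R -> Prop) : (\forall r \near 0, P r) ->
  \forall h \near (0 : C R), P (complex.Re h) /\ P (complex.Im h).
Proof.
move=> P0; near=> h; split; near: h.
- exact: (@continuous_Re 0 _ P0).
- exact: (@continuous_Im 0 _ P0).
Unshelve. all: by end_near.
Qed.

Lemma cvg_complex {T} {F : set_system T} {FF : Filter F} (u v : T -> R) a b :
  u @ F --> a -> v @ F --> b ->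
  (u s +i* v s)%C @[s --> F] --> ((a +i* b)%C : C R).
Proof.
move=> /cvgrPdist_lt ua /cvgrPdist_lt vb; apply/cvgC_normcP => e e0.
have e20 : 0 < e / 2 by rewrite divr_gt0.
apply: filterS2 (ua _ e20) (vb _ e20) => s uas vbs.
by apply: le_lt_trans (normc_le_ReIm _) _; rewrite /=; lra.
Qed.

End ComplexModulus.

Section ComplexExp.
Context {R : realType}.
Implicit Types z w h : C R.

Definition expC z : C R :=
  ((expR (complex.Re z) * cos (complex.Im z)) +i*
   (expR (complex.Re z) * sin (complex.Im z)))%C.

Lemma expCD z w : expC (z + w) = expC z * expC w.
Proof.
case: z => a b; case: w => c d; rewrite /expC /= expRD cosD sinD.
by apply/eqP; rewrite eq_complex /=; apply/andP; split; apply/eqP; ring.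
Qed.

Lemma expC_real (a : R) : expC a%:C%C = (expR a)%:C%C.
Proof. by rewrite /expC /= cos0 sin0 mulr1 mulr0. Qed.

Lemma expC0 : expC 0 = 1.
Proof. by have := expC_real 0; rewrite expR0. Qed.

Lemma expC_neq0 z : expC z != 0.
Proof.
apply: contra_neq (@oner_neq0 (C R)) => ez0.
by rewrite -expC0 -{1}(subrr z) expCD ez0 mul0r.
Qed.

Lemma normc_expC_sub1_le h (a := complex.Re h) (b := complex.Im h) :
  normc (expC h - 1 - h) <= `|expR a - 1 - a|
    + expR a * (`|cos b - 1| + `|sin b - b|) + `|expR a - 1| * `|b|.
Proof.
apply: le_trans (normc_le_ReIm _) _; case: h @a @b => a b /=; simpc => /=.
have -> : expR a * cos b - 1 - a = expR a - 1 - a + expR a * (cos b - 1) by ring.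
have -> : expR a * sin b - b = expR a * (sin b - b) + (expR a - 1) * b by ring.
apply: le_trans (lerD (ler_normD _ _) (ler_normD _ _)) _.
by rewrite !normrM (ger0_norm (expR_ge0 a)) mulrDr; lra.
Qed.

Lemma near0_expR_cos_sin (e : R) : 0 < e -> \forall r \near 0,
  [/\ `|expR r - 1 - r| <= e * `|r|, `|cos r - 1| <= e * `|r|,
      `|sin r - r| <= e * `|r|, `|expR r - 1| <= e & `|expR r - 1| <= 1].
Proof.
move=> e0; have ltexp : \forall r \near 0, `|expR r - 1 - r| <= e * `|r|.
  apply: filterS (is_derive_small_o (is_derive_expR 0) e0) => r.
  by rewrite addr0 expR0 mulr1.
have ltcos : \forall r \near 0, `|cos r - 1| <= e * `|r|.
  apply: filterS (is_derive_small_o (is_derive_cos 0) e0) => r.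
  by rewrite addr0 cos0 sin0 oppr0 mulr0 subr0.
have ltsin : \forall r \near 0, `|sin r - r| <= e * `|r|.
  apply: filterS (is_derive_small_o (is_derive_sin 0) e0) => r.
  by rewrite addr0 sin0 cos0 mulr1 subr0.
have exp_near := cvgr_dist_le _ _ (@continuous_expR R 0).
near=> r; split; [exact: (near ltexp r) | exact: (near ltcos r) |
                  exact: (near ltsin r) | |];
  by rewrite distrC -expR0; near: r; exact: exp_near.
Unshelve. all: by end_near.
Qed.

Lemma expC_sub1_small e : 0 < e ->
  \forall h \near (0 : C R), normc (expC h - 1 - h) <= e * normc h.
Proof.
(* Near 0, normc_expC_sub1_le bounds the error by e' |Re h| + 5 e' |Im h|. *)
move=> e0; pose e' := e / 6; have e'0 : 0 < e' by rewrite divr_gt0.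
have /near0_ReIm := near0_expR_cos_sin e'0.
apply: filterS => h [[ea _ _ eaD ea1] [_ cb sb _ _]].
apply: le_trans (normc_expC_sub1_le h) _.
set a := complex.Re h; set b := complex.Im h; set N := normc h.
have [aN bN] : `|a| <= N /\ `|b| <= N.
  by split; [exact: normc_Re | exact: normc_Im].
have ea2 : expR a <= 2 by move: ea1; rewrite ler_norml; lra.
have cosin :
    expR a * (`|cos b - 1| + `|sin b - b|) <= 2 * (e' * `|b| + e' * `|b|).
  by apply: ler_pM; rewrite ?addr_ge0 ?expR_ge0 ?lerD.
have expb : `|expR a - 1| * `|b| <= e' * `|b| by rewrite ler_wpM2r.
have e'a : e' * `|a| <= e' * N by rewrite ler_wpM2l // ltW.
have e'b : e' * `|b| <= e' * N by rewrite ler_wpM2l // ltW.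
rewrite [e](_ : _ = 6 * e'); last by rewrite /e' mulrC divfK.
lra.
Qed.

Lemma cvg_expC_quotient : h^-1 * (expC h - 1) @[h --> 0^'] --> (1 : C R).
Proof.
apply/cvgC_normcP => e e0; have e20 : 0 < e / 2 by rewrite divr_gt0.
near=> h; have h0 : h != 0 by near: h; exact: nbhs_dnbhs_neq.
have -> : 1 - h^-1 * (expC h - 1) = - (h^-1 * (expC h - 1 - h)) by field.
have hN := normc_gt0 h0.
rewrite normcN normcM normcV mulrC ltr_pdivrMr //.
apply: le_lt_trans (_ : _ <= e / 2 * normc h) _.
  by near: h; exact: (nbhs_dnbhs (expC_sub1_small e20)).
by rewrite ltr_pM2r //; lra.
Unshelve. all: by end_near.
Qed.

Lemma is_derive_expC z : is_derive z 1 expC (expC z).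
Proof.
apply/is_derive1P.
have -> : (fun h => h^-1 * (expC (h + z) - expC z)) =
          (fun h => expC z * (h^-1 * (expC h - 1))).
  by apply/funext => h; rewrite expCD; ring.
have := cvgM (cvg_cst (expC z)) cvg_expC_quotient.
by rewrite mulr1; apply; exact: dnbhs_filter.
Qed.

End ComplexExp.

Section ComplexLog.
Context {R : realType}.
Implicit Types t : C R.

(* The principal logarithm, meaningful only on the half-plane 0 < Re t. *)
Definition lnC t : C R :=
  (ln (normc t) +i* atan (complex.Im t / complex.Re t))%C.

Lemma lnCK t : 0 < complex.Re t -> expC (lnC t) = t.
Proof.
case: t => x y /= x0; set u := y / x; set s := Num.sqrt (1 + u ^+ 2).
have s0 : 0 < s by rewrite sqrtr_gt0 ltr_pwDl ?sqr_ge0.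
have normc_xy : normc (x +i* y)%C = x * s.
  rewrite /normc; have -> : x ^+ 2 + y ^+ 2 = x ^+ 2 * (1 + u ^+ 2).
    by rewrite /u; field; exact: lt0r_neq0.
  by rewrite sqrtrM ?sqr_ge0 // sqrtr_sqr ger0_norm // ltW.
have cosE : cos (atan u) = s^-1 by rewrite cos_atan.
have sinE : sin (atan u) = u / s.
  by rewrite -[u in RHS]atanK /tan cosE invrK mulfK // lt0r_neq0.
rewrite /lnC normc_xy /expC /= lnK ?posrE ?mulr_gt0 // cosE sinE.
by congr (_ +i* _)%C; rewrite /u; field; rewrite ?lt0r_neq0.
Qed.

Lemma continuous_lnC t : 0 < complex.Re t -> {for t, continuous lnC}.
Proof.
move=> t0; have t_neq0 := Re_gt0_neq0 t0.
apply: (cvg_complex (FF := nbhs_filter t)).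
  exact: cvg_comp _ _ (@continuous_normc _ t) (continuous_ln (normc_gt0 t_neq0)).
have ImRe :
    complex.Im s / complex.Re s @[s --> t] --> complex.Im t / complex.Re t.
  exact: cvgM (@continuous_Im _ t) (cvgV (lt0r_neq0 t0) (@continuous_Re _ t)).
exact: cvg_comp _ _ ImRe (@continuous_atan R _).
Qed.

Lemma lnC_realM (r : R) t : 0 < r -> 0 < complex.Re t ->
  lnC (r%:C%C * t) = (ln r)%:C%C + lnC t.
Proof.
move=> r0 t0; rewrite /lnC normcM normcR ger0_norm ?ltW //.
rewrite lnM ?posrE ?normc_gt0 ?Re_gt0_neq0 //.
case: t t0 => x y /= x0; simpc => /=.
by rewrite invfM mulrACA mulfV ?mul1r // lt0r_neq0.
Qed.

Lemma is_derive_lnC t : 0 < complex.Re t -> is_derive t 1 lnC t^-1.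
Proof.
move=> t0; have := @is_derive_inverse_near _ expC lnC t (expC (lnC t)).
rewrite lnCK //; apply; rewrite ?Re_gt0_neq0 //; first exact: continuous_lnC.
- have := cvgr_gt (FF := nbhs_filter t) _ (@continuous_Re _ t) _ t0.
  by apply: filterS => s /lnCK.
- by rewrite -{2}(lnCK t0); exact: is_derive_expC.
Qed.

End ComplexLog.

Section ComplexPower.
Context {R : realType}.
Implicit Types (t : C R) (c : R).

Definition powC t c : C R := expC (c%:C%C * lnC t).

Lemma powC_realM (r : R) t c : 0 < r -> 0 < complex.Re t ->
  powC (r%:C%C * t) c = (r `^ c)%:C%C * powC t c.
Proof.
move=> r0 t0; rewrite /powC lnC_realM // mulrDr expCD -rmorphM expC_real.
by rewrite /powR gt_eqF.
Qed.

Lemma differentiable_powC t c : 0 < complex.Re t -> differentiable (powC ^~ c) t.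
Proof.
move=> t0; rewrite (_ : powC ^~ c = expC \o (fun s => c%:C%C * lnC s)) //.
apply: differentiable_comp; last first.
  exact/derivable1_diffP/ex_derive/is_derive_expC.
apply: differentiableM; first exact: differentiable_cst.
exact/derivable1_diffP/ex_derive/(is_derive_lnC t0).
Qed.

End ComplexPower.

Section UnitDisc.
Context {R : realType}.
Implicit Types v : C R.

Lemma phi_norm_identity v :
  `|2 + v| ^+ 2 - `|2 * v + 1| ^+ 2 = 3 * (1 - `|v| ^+ 2).
Proof.
rewrite !sqr_normc !rmorphD rmorphM rmorph1 rmorph_nat; ring.
Qed.

Lemma two_addr_neq0 v : `|v| < 1 -> 2 + v != 0.
Proof. by apply: addr_neq0_norm_lt1; rewrite ger0_norm ?ler1n. Qed.

Lemma phiE v : `|v| < 1 -> phi v = (2 * v + 1) / (2 + v).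
Proof.
by move=> /two_addr_neq0 v2; rewrite /phi; field; rewrite v2.
Qed.

Lemma phi_disc v : `|v| < 1 -> `|phi v| < 1.
Proof.
move=> v1; have v2 := two_addr_neq0 v1.
rewrite -(expr_lt1 (n := 2)) // phiE // normrM normfV exprMn exprVn.
rewrite ltr_pdivrMr ?exprn_gt0 ?normr_gt0 // mul1r -subr_gt0 phi_norm_identity.
by rewrite pmulr_rgt0 // subr_gt0 expr_lt1.
Qed.

Lemma phi_invE v : phi_inv v = - phi (- v).
Proof. by rewrite /phi /phi_inv -[RHS]mulNr opprD opprK mulNr. Qed.

Lemma phi_inv_disc v : `|v| < 1 -> `|phi_inv v| < 1.
Proof. by move=> v1; rewrite phi_invE normrN phi_disc ?normrN. Qed.

Lemma phi_invK v : `|v| < 1 -> phi (phi_inv v) = v.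
Proof.
move=> v1; have v2 : 2 - v != 0 by rewrite two_addr_neq0 ?normrN.
rewrite phiE ?phi_inv_disc // /phi_inv; field.
have -> : 2 * (2 - v) + (v * 2 - 1) = 3 :> C R by ring.
by rewrite v2 pnatr_eq0.
Qed.

Lemma one_subr_neq0 v : `|v| < 1 -> 1 - v != 0.
Proof. by move=> v1; rewrite addr_neq0_norm_lt1 ?normr1 ?normrN. Qed.

Lemma phi_pow_disc n v : `|v| < 1 -> `|phi_pow n v| < 1.
Proof.
move=> v1; case: n => k /=; elim: k => [|k IH] //=;
  by [apply: phi_disc | apply: phi_inv_disc].
Qed.

Definition cayley v : C R := (1 + v) / (1 - v).

Lemma cayley_phi v : `|v| < 1 -> cayley (phi v) = 3 * cayley v.
Proof.
move=> v1; have v2 := two_addr_neq0 v1; have v_1 := one_subr_neq0 v1.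
by rewrite /cayley phiE //; field; rewrite v2 v_1.
Qed.

Lemma Re_cayley_gt0 v : `|v| < 1 -> 0 < complex.Re (cayley v).
Proof.
move=> v1; have v_1 := one_subr_neq0 v1.
have vJ_1 : 1 - v^*%C != 0 by rewrite -conjc1 -rmorphB conjc_eq0.
have ReE : (complex.Re (cayley v))%:C%C = (1 - `|v| ^+ 2) / `|1 - v| ^+ 2.
  rewrite ReJ_add !sqr_normc /cayley rmorphM fmorphV rmorphD rmorphB rmorph1.
  by field; rewrite v_1 vJ_1.
by rewrite -ltcR ReE divr_gt0 ?exprn_gt0 ?normr_gt0 // subr_gt0 expr_lt1.
Qed.

End UnitDisc.

Section Multiplier.
Context {R : realType}.
Implicit Types v : C R.

Definition lambda v : C R := powC (cayley v) (ln 2 / ln 3).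

Lemma lambda_neq0 v : lambda v != 0.
Proof. exact: expC_neq0. Qed.

Lemma lambda_phi v : `|v| < 1 -> lambda (phi v) = 2 * lambda v.
Proof.
move=> v1; rewrite /lambda cayley_phi // -(rmorph_nat (real_complex R)).
by rewrite powC_realM ?Re_cayley_gt0 // powR_ln_div ?ltr1n // rmorph_nat.
Qed.

Lemma lambda_phi_inv v : `|v| < 1 -> lambda (phi_inv v) = lambda v / 2.
Proof.
move=> v1; rewrite -{2}(phi_invK v1) lambda_phi ?phi_inv_disc //.
by rewrite mulrC mulKf ?pnatr_eq0.
Qed.

Lemma lambda_phi_pow n v : `|v| < 1 -> lambda (phi_pow n v) = 2 ^ n * lambda v.
Proof.
move=> v1; case: n => k.
  rewrite -exprnP /=; elim: k => [|k IH] /=; first by rewrite expr0 mul1r.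
  by rewrite lambda_phi ?IH ?exprS ?mulrA // (phi_pow_disc (Posz k)).
rewrite NegzE -exprnN /=; elim: k => [|k IH] /=.
  by rewrite lambda_phi_inv // expr1 mulrC.
rewrite lambda_phi_inv ?(phi_pow_disc (Negz k)) // [iter _ _ _]/= IH.
by rewrite mulrAC -invfM -exprSr.
Qed.

Lemma differentiable_cayley v : `|v| < 1 -> differentiable cayley v.
Proof.
move=> v1; have did : differentiable (@id (C R)) v by [].
have dsub := differentiableB (differentiable_cst (1 : C R) v) did.
exact: differentiableM (differentiableD (differentiable_cst (1 : C R) v) did)
                       (differentiableV dsub (one_subr_neq0 v1)).
Qed.

Lemma differentiable_lambda v : `|v| < 1 -> differentiable lambda v.
Proof.
move=> v1; rewrite (_ : lambda = powC ^~ (ln 2 / ln 3) \o cayley) //.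
apply: differentiable_comp; first exact: differentiable_cayley.
exact: differentiable_powC (Re_cayley_gt0 v1).
Qed.

End Multiplier.

Lemma holomorphic_qholomorphic (R : realType) (V W : normedModType (C R))
    (X : set V) (Y : set W) (eY : W -> W -> Prop) (f : V -> W) :
  (forall x, X x -> Y (f x)) -> (forall y, eY y y) ->
  (forall x, X x -> \forall y \near x, differentiable f y) ->
  qholomorphic X Y eY f.
Proof.
move=> XY eY_refl fD x Xx; exists f; apply: filterS (fD x Xx) => y dfy.
by split=> // Xy; split; [exact: XY | exact: eY_refl].
Qed.

Section Trivialization.
Context {R : realType}.
Local Notation V := 'rV[C R]_3.
Implicit Types p q : V.

Definition row3 (a b c : C R) : V := \row_(j < 3) nth 0 [:: a; b; c] j.

Lemma co0_row3 a b c : co (row3 a b c) 0 = a.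
Proof. by rewrite /co mxE inordK. Qed.

Lemma co1_row3 a b c : co (row3 a b c) 1 = b.
Proof. by rewrite /co mxE inordK. Qed.

Lemma co2_row3 a b c : co (row3 a b c) 2 = c.
Proof. by rewrite /co mxE inordK. Qed.

Definition co_row3E := (co0_row3, co1_row3, co2_row3).

Lemma differentiable_row3 (a b c : V -> C R) p :
  differentiable a p -> differentiable b p -> differentiable c p ->
  differentiable (fun q => row3 (a q) (b q) (c q)) p.
Proof.
move=> da db dc.
have -> : (fun q => row3 (a q) (b q) (c q)) =
    (fun q => a q *: 'e_0) + (fun q => b q *: 'e_1) + (fun q => c q *: 'e_2).
  apply/funext => q; apply/rowP => j; rewrite !mxE.
  by case: j => [[|[|[|]]]] //= _; rewrite ?mulr1 ?mulr0 ?addr0 ?add0r.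
by apply: differentiableD; [apply: differentiableD|]; exact: differentiableZl.
Qed.

Lemma differentiable_co k p : differentiable (fun q : V => co q k) p.
Proof. exact: differentiable_coord. Qed.

Lemma near_co_disc k p : `|co p k| < 1 -> \forall q \near p, `|co q k| < 1.
Proof.
exact: near_norm_lt1 (differentiable_continuous (differentiable_co k p)).
Qed.

Definition to_product p : V :=
  row3 (co p 2) (co p 0 / lambda (co p 2)) (co p 1 / lambda (co p 2)).
Definition to_bundle q : V :=
  row3 (lambda (co q 0) * co q 1) (lambda (co q 0) * co q 2) (co q 0).

Lemma Xrel_refl p : Xrel p p.
Proof. by exists 0; rewrite expr0z !mul1r. Qed.

Lemma Yrel_refl q : Yrel q q.
Proof. by exists 0. Qed.

Lemma Ydom_to_product p : Xdom p -> Ydom (to_product p).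
Proof.
move=> [z0 v1]; rewrite /Ydom /to_product /= !co_row3E; split=> //.
by case: z0 => z0; [left|right]; rewrite mulf_neq0 // invr_eq0 lambda_neq0.
Qed.

Lemma Xdom_to_bundle q : Ydom q -> Xdom (to_bundle q).
Proof.
move=> [v1 z0]; rewrite /Xdom /to_bundle /= !co_row3E; split=> //.
by case: z0 => z0; [left|right]; rewrite mulf_neq0 // lambda_neq0.
Qed.

Lemma Yrel_to_product p p' :
  Xdom p -> Xrel p p' -> Yrel (to_product p) (to_product p').
Proof.
move=> [_ v1] [n [e0 e1 e2]]; exists n.
have two_n : (2 : C R) ^ n != 0 by rewrite expfz_neq0 // pnatr_eq0.
rewrite /to_product !co_row3E e0 e1 e2 lambda_phi_pow //.
by split=> //; rewrite invfM mulrACA divff ?mul1r.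
Qed.

Lemma Xrel_to_bundle q q' :
  Ydom q -> Yrel q q' -> Xrel (to_bundle q) (to_bundle q').
Proof.
move=> [v1 _] [n [e0 e1 e2]]; exists n.
by rewrite /to_bundle !co_row3E e0 e1 e2 lambda_phi_pow // !mulrA.
Qed.

Lemma to_productK p : Xrel (to_bundle (to_product p)) p.
Proof.
exists 0; rewrite expr0z /to_bundle /to_product !co_row3E !mul1r.
by split=> //; rewrite mulrC divfK ?lambda_neq0.
Qed.

Lemma to_bundleK q : Yrel (to_product (to_bundle q)) q.
Proof.
exists 0; rewrite /to_bundle /to_product !co_row3E.
by split=> //; rewrite mulrC mulKf ?lambda_neq0.
Qed.

Lemma differentiable_to_product p : `|co p 2| < 1 -> differentiable to_product p.
Proof.
move=> v1; have dlam := differentiable_comp (differentiable_co 2 p)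
                                            (differentiable_lambda v1).
have dlamV := differentiableV dlam (lambda_neq0 _).
apply: differentiable_row3; first exact: differentiable_co.
  exact: differentiableM (differentiable_co 0 p) dlamV.
exact: differentiableM (differentiable_co 1 p) dlamV.
Qed.

Lemma differentiable_to_bundle q : `|co q 0| < 1 -> differentiable to_bundle q.
Proof.
move=> v1; have dlam := differentiable_comp (differentiable_co 0 q)
                                            (differentiable_lambda v1).
apply: differentiable_row3; last exact: differentiable_co.
  exact: differentiableM dlam (differentiable_co 1 q).
exact: differentiableM dlam (differentiable_co 2 q).
Qed.

End Trivialization.

Theorem theorem3p4 (R : realType) :
  quot_biholomorphic (@Xdom R) (@Xrel R) (@Ydom R) (@Yrel R).
Proof.
exists to_product, to_bundle; split.
- by split=> [|p p' Xp _]; [exact: Ydom_to_product | exact: Yrel_to_product Xp].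
- by split=> [|q q' Yq _]; [exact: Xdom_to_bundle | exact: Xrel_to_bundle Yq].
- apply: holomorphic_qholomorphic => [|q|p [_ v1]];
    [exact: Ydom_to_product | exact: Yrel_refl |].
  by apply: filterS (near_co_disc v1) => q; exact: differentiable_to_product.
- apply: holomorphic_qholomorphic => [|p|q [v1 _]];
    [exact: Xdom_to_bundle | exact: Xrel_refl |].
  by apply: filterS (near_co_disc v1) => p; exact: differentiable_to_bundle.
- by split=> [p _|q _]; [exact: to_productK | exact: to_bundleK].
Qed.
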